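(* Let $m, n_0, n_1$ be positive integers and $n(\lambda) = n_0 + n_1\lambda$. Suppose $x(\lambda) = x_0 + x_1\lambda$, $y(\lambda) = y_0 + y_1\lambda$, $z(\lambda) = z_0 + z_1\lambda$ are polynomials of degree $1$ with positive rational coefficients satisfying $$\frac{m}{n(\lambda)} = \frac{1}{x(\lambda)} + \frac{1}{y(\lambda)} + \frac{1}{z(\lambda)}$$ identically. Then $$x_1 = \frac{x_0 n_1}{n_0},\qquad y_1 = \frac{y_0 n_1}{n_0},\qquad z_1 = \frac{z_0 n_1}{n_0}.$$
   Context: $\lambda$ is an indeterminate; the equation is an identity of rational functions in $\lambda$. *)

From mathcomp Require Import all_boot all_order all_algebra.
From mathcomp Require Export fraction.
Set Implicit Arguments. Unset Strict Implicit. Unset Printing Implicit Defensive.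
Import GRing.Theory FracField.
Local Open Scope ring_scope.

Notation ratfun := {fraction {poly rat}}.

Definition toRF (p : {poly rat}) : ratfun := @FracField.tofrac _ p.

Definition lin (a b : rat) : {poly rat} := a%:P + b *: 'X.

From mathcomp Require Import all_boot all_order all_algebra.
From mathcomp Require Import ring.
Import Order.TTheory GRing.Theory Num.Theory FracField.
Local Open Scope ring_scope.

(* Clearing denominators gives the polynomial identity m x y z = n (y z + x z + x y).
   Write x = x0 (1 + a λ), y = y0 (1 + b λ), z = z0 (1 + c λ), n = n0 (1 + d λ).
   Divided by n0 x0 y0 z0, the coefficients of 1, λ and λ² of the identity say that
   for the weights 1/x0, 1/y0, 1/z0 the rates a, b, c have mean d and second moment
   d².  Hence their weighted variance (a - d)²/x0 + (b - d)²/y0 + (c - d)²/z0 vanishes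
   and a = b = c = d. *)

Lemma eq_div_sum_inv3 (F : fieldType) (c n x y z : F) :
  n != 0 -> x != 0 -> y != 0 -> z != 0 ->
  c / n = x^-1 + y^-1 + z^-1 -> c * (x * y * z) = n * (y * z + x * z + x * y).
Proof.
move=> n_neq0 x_neq0 y_neq0 z_neq0 e.
transitivity (c / n * (n * (x * y * z))); first by field.
by rewrite e; field; apply/and3P.
Qed.

Lemma tofrac_div_sum_inv3 (R : idomainType) (m : nat) (n x y z : R) :
  n != 0 -> x != 0 -> y != 0 -> z != 0 ->
  (m%:R : {fraction R}) / tofrac n = (tofrac x)^-1 + (tofrac y)^-1 + (tofrac z)^-1 ->
  m%:R * (x * y * z) = n * (y * z + x * z + x * y).
Proof.
move=> n_neq0 x_neq0 y_neq0 z_neq0 e.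
apply/eqP; rewrite -tofrac_eq !(rmorphM, rmorphD) /= rmorph_nat.
by apply/eqP; apply: eq_div_sum_inv3 e; rewrite ?tofrac_eq0.
Qed.

Lemma poly_cubic_eq0 (R : nzRingType) (c0 c1 c2 c3 : R) :
  c0%:P + c1%:P * 'X + c2%:P * 'X^2 + c3%:P * 'X^3 = 0 ->
  [/\ c0 = 0, c1 = 0, c2 = 0 & c3 = 0].
Proof.
move=> e; have coef k := congr1 (coefp k) e.
move: (coef 0%N) (coef 1%N) (coef 2%N) (coef 3%N).
by rewrite /= !coefE /= !(mulr0, mulr1, addr0, add0r) => -> -> -> ->.
Qed.

Lemma psum_sqr3_eq0 (R : realDomainType) (a b c u v w : R) :
  0 < a -> 0 < b -> 0 < c ->
  a * u ^+ 2 + b * v ^+ 2 + c * w ^+ 2 = 0 -> [/\ u = 0, v = 0 & w = 0].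
Proof.
move=> a_gt0 b_gt0 c_gt0.
have term_ge0 (k t : R) : 0 < k -> 0 <= k * t ^+ 2.
  by move=> k_gt0; rewrite mulr_ge0 ?sqr_ge0 ?ltW.
move/eqP; rewrite paddr_eq0 ?addr_ge0 ?term_ge0 // paddr_eq0 ?term_ge0 //.
rewrite !mulf_eq0 (gt_eqF a_gt0) (gt_eqF b_gt0) (gt_eqF c_gt0) /= !orbb.
by move=> /andP[/andP[/eqP-> /eqP->] /eqP->].
Qed.

Section LinearDenominators.

Context {R : realDomainType} {m n0 n1 x0 x1 y0 y1 z0 z1 : R}.

Let N := n0%:P + n1 *: 'X.
Let X := x0%:P + x1 *: 'X.
Let Y := y0%:P + y1 *: 'X.
Let Z := z0%:P + z1 *: 'X.

Let c0 := m * (x0 * y0 * z0) - n0 * (y0 * z0 + x0 * z0 + x0 * y0).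
Let c1 := m * (x1 * y0 * z0 + x0 * y1 * z0 + x0 * y0 * z1)
  - n0 * (y1 * z0 + y0 * z1 + x1 * z0 + x0 * z1 + x1 * y0 + x0 * y1)
  - n1 * (y0 * z0 + x0 * z0 + x0 * y0).
Let c2 := m * (x0 * y1 * z1 + x1 * y0 * z1 + x1 * y1 * z0)
  - n0 * (y1 * z1 + x1 * z1 + x1 * y1)
  - n1 * (y1 * z0 + y0 * z1 + x1 * z0 + x0 * z1 + x1 * y0 + x0 * y1).

Lemma sum_inv3_identity_coef :
  m%:P * (X * Y * Z) = N * (Y * Z + X * Z + X * Y) -> [/\ c0 = 0, c1 = 0 & c2 = 0].
Proof.
move/eqP; rewrite -subr_eq0 => /eqP identity.
have [] := @poly_cubic_eq0 _ c0 c1 c2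
  (m * (x1 * y1 * z1) - n1 * (y1 * z1 + x1 * z1 + x1 * y1)) => //.
by rewrite -identity /N /X /Y /Z /c0 /c1 /c2 -!mul_polyC; ring.
Qed.

Lemma rates_eq_of_coef : n0 != 0 -> 0 < x0 -> 0 < y0 -> 0 < z0 ->
  c0 = 0 -> c1 = 0 -> c2 = 0 ->
  [/\ x1 * n0 = x0 * n1, y1 * n0 = y0 * n1 & z1 * n0 = z0 * n1].
Proof.
move=> n0_neq0 x0_gt0 y0_gt0 z0_gt0 c0_eq0 c1_eq0 c2_eq0.
set P := x0 * y0 * z0.
set T1 := x1 * y0 * z0 + x0 * y1 * z0 + x0 * y0 * z1.
set T2 := x0 * y1 * z1 + x1 * y0 * z1 + x1 * y1 * z0.
(* n0^3 P^3 times the weighted variance, as a combination of c0, c1 and c2. *)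
have variance : n0 * ((y0 * z0) ^+ 3 * (x1 * n0 - x0 * n1) ^+ 2
    + (x0 * z0) ^+ 3 * (y1 * n0 - y0 * n1) ^+ 2
    + (x0 * y0) ^+ 3 * (z1 * n0 - z0 * n1) ^+ 2)
  = - (n0 ^+ 2 * P ^+ 2 * c2 + n0 * P * (n1 * P - n0 * T1) * c1
       + (n0 ^+ 2 * T1 ^+ 2 - n0 ^+ 2 * P * T2 - n0 * n1 * P * T1) * c0).
  by rewrite /c0 /c1 /c2 /P /T1 /T2; ring.
move: variance; rewrite c0_eq0 c1_eq0 c2_eq0 !mulr0 !addr0 oppr0 => /eqP.
rewrite mulf_eq0 (negPf n0_neq0) /= => /eqP /psum_sqr3_eq0[||| /eqP dx /eqP dy /eqP dz];
  rewrite ?exprn_gt0 ?mulr_gt0 //.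
by split; apply/eqP; rewrite -subr_eq0.
Qed.

End LinearDenominators.

Lemma lin_neq0 (a b : rat) : a != 0 -> lin a b != 0.
Proof.
apply: contra_neq => /(congr1 (coefp 0)).
by rewrite /= /lin coefD coefC coefZ coefX mulr0 addr0 coef0.
Qed.

Theorem lemma4 (m n0 n1 : nat) (x0 x1 y0 y1 z0 z1 : rat) :
  (0 < m)%N -> (0 < n0)%N -> (0 < n1)%N ->
  0 < x0 -> 0 < x1 -> 0 < y0 -> 0 < y1 -> 0 < z0 -> 0 < z1 ->
  (m%:R : ratfun) / toRF (lin n0%:R n1%:R) =
    (toRF (lin x0 x1))^-1 + (toRF (lin y0 y1))^-1 + (toRF (lin z0 z1))^-1 ->
  x1 = x0 * n1%:R / n0%:R /\ y1 = y0 * n1%:R / n0%:R /\ z1 = z0 * n1%:R / n0%:R.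
Proof.
move=> _ n0_gt0 _ x0_gt0 _ y0_gt0 _ z0_gt0 _ sum_inv.
have n0_neq0 : n0%:R != 0 :> rat by rewrite pnatr_eq0 -lt0n.
have lin_pos_neq0 a b : 0 < a -> lin a b != 0 by move/lt0r_neq0/lin_neq0.
have := @tofrac_div_sum_inv3 _ m _ _ _ _ (lin_neq0 _ _ n0_neq0)
  (lin_pos_neq0 _ _ x0_gt0) (lin_pos_neq0 _ _ y0_gt0) (lin_pos_neq0 _ _ z0_gt0) sum_inv.
rewrite -polyC_natr => /sum_inv3_identity_coef[c0_eq0 c1_eq0 c2_eq0].
have [<- <- <-] := rates_eq_of_coef n0_neq0 x0_gt0 y0_gt0 z0_gt0 c0_eq0 c1_eq0 c2_eq0.
by rewrite !mulfK.
Qed.
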